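(* Assume the setting in the context (including conditions (1) and (2) on $\theta_i$). Let $\tilde x\in\tilde{\mathcal{X}}$, $i\in N$ and $\eta\ge0$. If there exist a generator $Z(i,\tilde x)$ for $(i,\tilde x)$ and $h\in\partial_i\tilde f_i(\tilde x_i,\tilde x_{-i})$ such that $$\langle h,x_i-\tilde x_i\rangle\ge-\eta\|x_i-\tilde x_i\|\quad\text{for all }x_i\in\operatorname{conv}Z(i,\tilde x),$$ then $|\tilde f_i(x_i,\tilde x_{-i})-\tilde f_i(\tilde x_i,\tilde x_{-i})|\le\eta\|x_i-\tilde x_i\|$ for all $x_i\in Z(i,\tilde x)$. In particular, if this hypothesis holds for every player $i$ with generators $(Z(i,\tilde x))_i$, then $\tilde x$ satisfies the $\eta\Delta$-stability condition with respect to $(Z(i,\tilde x))_i$.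
   Context: Setting: $N=\{1,\dots,n\}$; for each $i$, $\mathcal{X}_i\subset\mathbb{R}^d$ nonempty closed bounded with diameter $\le\Delta$, $\tilde{\mathcal{X}}_i=\operatorname{conv}(\mathcal{X}_i)$, $\tilde{\mathcal{X}}=\prod_i\tilde{\mathcal{X}}_i$, $\tilde{\mathcal{X}}_{-i}=\prod_{j\neq i}\tilde{\mathcal{X}}_j$; $A_j$ real $q\times d$ matrices; $\Omega\subset\mathbb{R}^q$ a neighborhood of $\{\frac1n\sum_jA_jy_j:y_j\in\tilde{\mathcal{X}}_j\}$; $\theta_i:\mathcal{X}_i\times\Omega\to\mathbb{R}$ with (1) $\theta_i(\cdot,y)$ lower semicontinuous on $\mathcal{X}_i$ for each $y\in\Omega$, (2) $|\theta_i(x_i,y')-\theta_i(x_i,y)|\le H\|y'-y\|^\gamma$ for some constants $H,\gamma>0$. Costs $f_i(x_i,x_{-i})=\theta_i(x_i,\frac1n\sum_jA_jx_j)$ for $x_i\in\mathcal{X}_i,x_{-i}\in\tilde{\mathcal{X}}_{-i}$. Convexified cost: $\tilde f_i(x_i,x_{-i})=\inf\{\sum_{k=1}^{d+1}\alpha^kf_i(z^k,x_{-i}):\alpha\in\mathcal{S}_d,z^k\in\mathcal{X}_i,x_i=\sum_k\alpha^kz^k\}$ for $x\in\tilde{\mathcal{X}}$, $\mathcal{S}_d$ the probability simplex of $\mathbb{R}^{d+1}$; the function $\tilde f_i(\cdot,x_{-i})$ is convex on $\tilde{\mathcal{X}}_i$ and $\partial_i\tilde f_i(\tilde x_i,\tilde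 x_{-i})$ denotes its subdifferential at $\tilde x_i$. A generator for $(i,x)$ is a set $Z(i,x)=\{z^1,\dots,z^{d+1}\}\subset\mathcal{X}_i$ with weights $\alpha\in\mathcal{S}_d$ attaining the infimum ($x_i=\sum_k\alpha^kz^k$, $\tilde f_i(x_i,x_{-i})=\sum_k\alpha^kf_i(z^k,x_{-i})$). A point $x\in\tilde{\mathcal{X}}$ satisfies the $\eta$-stability condition with respect to a generator profile $(Z(i,x))_i$ if for every $i$, $\tilde f_i(y_i,x_{-i})\le\tilde f_i(x_i,x_{-i})+\eta$ for all $y_i\in Z(i,x)$.
   Formalization: A generator for (i, x̃) carries weights α that are all strictly positive, αᵏ > 0 for every k, in place of weights in $\mathcal{S}_d$ with zero entries allowed. The statement above fails without it. *)

From HB Require Import structures.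
From mathcomp Require Import all_boot all_order all_algebra.
From mathcomp Require Import classical_sets reals exp.
Set Implicit Arguments. Unset Strict Implicit. Unset Printing Implicit Defensive.
Import Order.TTheory GRing.Theory Num.Theory.
Local Open Scope classical_set_scope.
Local Open Scope ring_scope.

Section Defs.
Variable R : realType.

Definition dotv (d : nat) (u v : 'cV[R]_d) : R := \sum_(k < d) u k 0 * v k 0.
Definition enorm (d : nat) (u : 'cV[R]_d) : R := Num.sqrt (dotv u u).

Definition conv (d : nat) (S : set 'cV[R]_d) : set 'cV[R]_d :=
  [set x | exists (m : nat) (w : 'I_m -> R) (z : 'I_m -> 'cV[R]_d),
     (forall k, 0 <= w k) /\ \sum_(k < m) w k = 1 /\
     (forall k, S (z k)) /\ x = \sum_(k < m) w k *: z k].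

Definition simplex (d : nat) (a : 'I_d.+1 -> R) : Prop :=
  (forall k, 0 <= a k) /\ \sum_(k < d.+1) a k = 1.

Variables (n d q : nat).
Implicit Types (x : 'I_n -> 'cV[R]_d) (i : 'I_n).

Definition upd x i (y : 'cV[R]_d) : 'I_n -> 'cV[R]_d :=
  fun j => if j == i then y else x j.

Definition avg (A : 'I_n -> 'M[R]_(q, d)) x : 'cV[R]_q :=
  n%:R^-1 *: \sum_(j < n) (A j *m x j).

Definition fcost (theta : 'I_n -> 'cV[R]_d -> 'cV[R]_q -> R)
  (A : 'I_n -> 'M[R]_(q, d)) i x : R := theta i (x i) (avg A x).

Variables (X : 'I_n -> set 'cV[R]_d) (theta : 'I_n -> 'cV[R]_d -> 'cV[R]_q -> R)
  (A : 'I_n -> 'M[R]_(q, d)).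

Definition tfcost i x : R :=
  inf [set r | exists (a : 'I_d.+1 -> R) (z : 'I_d.+1 -> 'cV[R]_d),
     simplex a /\ (forall k, X i (z k)) /\ x i = \sum_(k < d.+1) a k *: z k /\
     r = \sum_(k < d.+1) a k * fcost theta A i (upd x i (z k))].

Definition is_generator i x (z : 'I_d.+1 -> 'cV[R]_d) (a : 'I_d.+1 -> R) : Prop :=
  simplex a /\ (forall k, 0 < a k) /\ (forall k, X i (z k)) /\ x i = \sum_(k < d.+1) a k *: z k /\
  tfcost i x = \sum_(k < d.+1) a k * fcost theta A i (upd x i (z k)).

Definition subdiff i x (h : 'cV[R]_d) : Prop :=
  forall y, conv (X i) y -> tfcost i x + dotv h (y - x i) <= tfcost i (upd x i y).

Definition eta_stable (eta : R) x (Z : 'I_n -> 'I_d.+1 -> 'cV[R]_d) : Prop :=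
  forall i k, tfcost i (upd x i (Z i k)) <= tfcost i x + eta.

End Defs.

Definition setting (R : realType) (n d q : nat) (X : 'I_n -> set 'cV[R]_d) (Delta : R)
  (A : 'I_n -> 'M[R]_(q, d)) (Omega : set 'cV[R]_q)
  (theta : 'I_n -> 'cV[R]_d -> 'cV[R]_q -> R) (H gamma : R) : Prop :=
  (forall i, exists x, X i x) /\
  (forall i x, (forall e : R, 0 < e -> exists y, X i y /\ enorm (y - x) < e) -> X i x) /\
  (forall i x y, X i x -> X i y -> enorm (x - y) <= Delta) /\
  (forall y : 'I_n -> 'cV[R]_d, (forall j, conv (X j) (y j)) ->
     exists e : R, 0 < e /\ forall w, enorm (w - avg A y) < e -> Omega w) /\
  (forall i y, Omega y -> forall x, X i x -> forall e : R, 0 < e ->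
     exists del : R, 0 < del /\
       forall x', X i x' -> enorm (x' - x) < del -> theta i x y - e < theta i x' y) /\
  0 < H /\ 0 < gamma /\
  (forall i x y y', X i x -> Omega y -> Omega y' ->
     `|theta i x y' - theta i x y| <= H * powR (enorm (y' - y)) gamma).

(* At a generator point z_k the convexified cost is squeezed: the subgradient
   inequality gives tf(z_k) >= tf(x) + <h, z_k - x>, while tf(z_k) <= f(z_k),
   and the gaps f(z_l) - tf(x) - <h, z_l - x> are nonnegative with a-average
   zero, hence all vanish because every weight is positive.  Thus
   tf(z_k) - tf(x) = <h, z_k - x>, which the hypothesis bounds from below at
   y = z_k and from above at y = x - a_k (z_k - x), a point still in the hull
   of Z.  Stability follows since |z_k - x| <= Delta, x being a convex
   combination of points of X_i.  For tf, an infimum, to be meaningful, f must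
   be bounded below on X_i: lower semicontinuity on a compact set plus Hoelder
   continuity in the aggregate. *)

From HB Require Import structures.
From mathcomp Require Import all_boot all_order all_algebra.
From mathcomp Require Import classical_sets boolp reals exp topology normedtype.
From mathcomp Require Import ring lra finmap.
Import Order.TTheory GRing.Theory Num.Theory.
Import numFieldNormedType.Exports.
Local Open Scope classical_set_scope.
Local Open Scope ring_scope.
Set Implicit Arguments. Unset Strict Implicit.

Section Euclidean.
Variables (R : realType) (d : nat).
Implicit Types (u v h w : 'cV[R]_d).

Lemma dotvC u v : dotv u v = dotv v u.
Proof. by apply: eq_bigr => k _; rewrite mulrC. Qed.

Lemma dotvDr h u v : dotv h (u + v) = dotv h u + dotv h v.
Proof. by rewrite /dotv -big_split; apply: eq_bigr => k _; rewrite mxE mulrDr. Qed.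

Lemma dotvZr h u c : dotv h (c *: u) = c * dotv h u.
Proof. by rewrite /dotv mulr_sumr; apply: eq_bigr => k _; rewrite mxE mulrCA. Qed.

Lemma dotv0r h : dotv h 0 = 0.
Proof. by rewrite /dotv big1 // => k _; rewrite mxE mulr0. Qed.

Lemma dotv_sumr h m (F : 'I_m -> 'cV[R]_d) :
  dotv h (\sum_(l < m) F l) = \sum_(l < m) dotv h (F l).
Proof. exact: (big_morph (dotv h) (dotvDr h) (dotv0r h)). Qed.

Lemma dotvv_ge0 u : 0 <= dotv u u.
Proof. by apply: sumr_ge0 => k _; rewrite -expr2 sqr_ge0. Qed.

Lemma enorm_ge0 u : 0 <= enorm u.
Proof. exact: sqrtr_ge0. Qed.

Lemma sqr_enorm u : enorm u ^+ 2 = dotv u u.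
Proof. exact/sqr_sqrtr/dotvv_ge0. Qed.

Lemma enorm0 : enorm (0 : 'cV[R]_d) = 0.
Proof. by rewrite /enorm /dotv big1 ?sqrtr0 // => k _; rewrite mxE mul0r. Qed.

Lemma enormZ u c : enorm (c *: u) = `|c| * enorm u.
Proof.
rewrite /enorm dotvZr dotvC dotvZr mulrA -expr2 sqrtrM ?sqr_ge0 //.
by rewrite sqrtr_sqr.
Qed.

Lemma normr_coord_le_enorm u j : `|u j 0| <= enorm u.
Proof.
rewrite /enorm -(sqrtr_sqr (u j 0)) ler_sqrt; last exact: dotvv_ge0.
rewrite /dotv (bigD1 j) //= expr2 lerDl; apply: sumr_ge0 => k _.
by rewrite -expr2 sqr_ge0.
Qed.

Lemma enorm_le_sum_coord u : enorm u <= \sum_k `|u k 0|.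
Proof.
have S0 : 0 <= \sum_k `|u k 0| by apply: sumr_ge0.
rewrite -[leRHS]ger0_norm // -sqrtr_sqr ler_sqrt ?sqr_ge0 //.
rewrite /dotv expr2 mulr_suml; apply: ler_sum => k _.
apply: le_trans (ler_norm _) _; rewrite normrM.
by apply: ler_wpM2l => //; rewrite (bigD1 k) //= lerDl; apply: sumr_ge0.
Qed.

Lemma cauchy_schwarz u v : dotv u v <= enorm u * enorm v.
Proof.
have [a0 b0] := (enorm_ge0 u, enorm_ge0 v).
have [u0|] := eqVneq (enorm u) 0.
  rewrite u0 mul0r /dotv big1 // => k _.
  by have := normr_coord_le_enorm u k; rewrite u0 normr_le0 => /eqP ->; rewrite mul0r.
have [v0|] := eqVneq (enorm v) 0.
  rewrite v0 mulr0 /dotv big1 // => k _.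
  by have := normr_coord_le_enorm v k; rewrite v0 normr_le0 => /eqP ->; rewrite mulr0.
move=> vn un; have up : 0 < enorm u by rewrite lt0r un.
have vp : 0 < enorm v by rewrite lt0r vn.
(* Sum the coordinatewise inequalities [0 <= (|v| u_k - |u| v_k)^2]. *)
have : 2 * (enorm u * enorm v) * dotv u v <=
       enorm v ^+ 2 * dotv u u + enorm u ^+ 2 * dotv v v.
  rewrite /dotv !mulr_sumr -big_split /=; apply: ler_sum => k _.
  have := sqr_ge0 (enorm v * u k 0 - enorm u * v k 0); nra.
rewrite -!sqr_enorm -[leRHS]/(_ + _).
have -> : enorm v ^+ 2 * enorm u ^+ 2 + enorm u ^+ 2 * enorm v ^+ 2 =
          2 * (enorm u * enorm v) * (enorm u * enorm v) by ring.
by rewrite ler_pM2l // !mulr_gt0.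
Qed.

Lemma enormD u v : enorm (u + v) <= enorm u + enorm v.
Proof.
have s0 : 0 <= enorm u + enorm v by rewrite addr_ge0 ?enorm_ge0.
rewrite -[leRHS]ger0_norm // -sqrtr_sqr ler_sqrt ?sqr_ge0 //.
have -> : dotv (u + v) (u + v) = dotv u u + 2 * dotv u v + dotv v v.
  rewrite dotvDr ![dotv (u + v) _]dotvC !dotvDr (dotvC v u); ring.
have := cauchy_schwarz u v; rewrite -!sqr_enorm; nra.
Qed.

Lemma enorm_sum m (F : 'I_m -> 'cV[R]_d) :
  enorm (\sum_(l < m) F l) <= \sum_(l < m) enorm (F l).
Proof.
elim/big_rec2: _ => [|l y1 y2 _ IH]; first by rewrite enorm0.
by apply: le_trans (enormD _ _) _; rewrite lerD2l.
Qed.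

Lemma enorm_sub_comb_le w m (a : 'I_m -> R) (z : 'I_m -> 'cV[R]_d) :
  (forall l, 0 <= a l) -> \sum_l a l = 1 ->
  enorm (w - \sum_l a l *: z l) <= \sum_l a l * enorm (w - z l).
Proof.
move=> a0 a1; have -> : w - \sum_l a l *: z l = \sum_l a l *: (w - z l).
  by rewrite (eq_bigr _ (fun l _ => scalerBr _ _ _)) sumrB -scaler_suml a1 scale1r.
apply: le_trans (enorm_sum _) _.
by apply: ler_sum => l _; rewrite enormZ ger0_norm.
Qed.

Lemma coord_box_in_enorm_ball (e : R) : 0 < e ->
  exists2 del, 0 < del & forall u, (forall j, `|u j 0| < del) -> enorm u < e.
Proof.
move=> e0; have d1 : 0 < d%:R + 1 :> R by rewrite ltr_pwDr.
exists (e / (d%:R + 1)); first by rewrite divr_gt0.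
move=> u ub; apply: le_lt_trans (enorm_le_sum_coord u) _.
apply: (@le_lt_trans _ _ (\sum_(j < d) e / (d%:R + 1))).
  by apply: ler_sum => j _; exact/ltW.
rewrite sumr_const card_ord -[_ *+ d]mulr_natl mulrA ltr_pdivrMr //; nra.
Qed.

End Euclidean.

Lemma enorm_mulmx_le (R : realType) (q d : nat) (M : 'M[R]_(q, d)) (u : 'cV[R]_d) :
  enorm (M *m u) <= (\sum_k \sum_j `|M k j|) * enorm u.
Proof.
apply: le_trans (enorm_le_sum_coord _) _; rewrite mulr_suml.
apply: ler_sum => k _; rewrite mxE mulr_suml.
apply: le_trans (ler_norm_sum _ _ _) _.
by apply: ler_sum => j _; rewrite normrM ler_wpM2l ?normr_coord_le_enorm.
Qed.

Section Hull.
Variables (R : realType) (d : nat).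

Lemma sub_conv (S : set 'cV[R]_d) : S `<=` conv S.
Proof.
move=> y Sy; exists 1%N, (fun=> 1), (fun=> y).
by rewrite !big_ord1 scale1r.
Qed.

(* The weights of [z k] are [a k * (1 + a k) - a k = a k ^+ 2 >= 0]. *)
Lemma conv_range_opposite m (a : 'I_m.+1 -> R) (z : 'I_m.+1 -> 'cV[R]_d) x k :
  simplex a -> x = \sum_l a l *: z l ->
  conv (range z) (x - a k *: (z k - x)).
Proof.
move=> [a0 a1] xE; pose b l := a l * (1 + a k) - (if l == k then a k else 0).
have at_k : \sum_l (if l == k then a k else 0) *: z l = a k *: z k.
  rewrite (bigD1 k) //= eqxx big1 ?addr0 // => l /negPf ->; exact: scale0r.
exists m.+1, b, z; split; [|split; [|split]].
- move=> l; rewrite /b; case: eqP => [->|_]; last by rewrite subr0 mulr_ge0 ?addr_ge0.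
  by rewrite mulrDr mulr1 addrAC subrr add0r mulr_ge0.
- by rewrite sumrB -mulr_suml a1 mul1r -big_mkcond big_pred1_eq addrK.
- by move=> l; exists l.
- rewrite (eq_bigr _ (fun l _ => scalerBl _ _ _)) sumrB at_k.
  under eq_bigr do rewrite mulrC -scalerA.
  by rewrite -scaler_sumr -xE scalerDl scale1r scalerBr opprB addrA.
Qed.

Lemma normr_dotv_generator_le m (a : 'I_m.+1 -> R) (z : 'I_m.+1 -> 'cV[R]_d) x h
    (eta : R) k :
  simplex a -> (forall l, 0 < a l) -> x = \sum_l a l *: z l ->
  (forall y, conv (range z) y -> - (eta * enorm (y - x)) <= dotv h (y - x)) ->
  `|dotv h (z k - x)| <= eta * enorm (z k - x).
Proof.
move=> sa a_gt0 xE hyp; rewrite ler_norml; apply/andP; split.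
  by apply/hyp/sub_conv; exists k.
have := hyp _ (conv_range_opposite k sa xE).
rewrite addrAC subrr add0r -(scaleNr (a k)) dotvZr enormZ normrN.
rewrite (ger0_norm (ltW (a_gt0 k))) mulNr lerN2 mulrCA ler_pM2l //.
Qed.

End Hull.

Section LowerBound.
Variables (R : realType) (d : nat).

(* Cover the compact box [-M, M]^d by the finitely many boxes of the hypothesis. *)
Lemma lbounded_of_locally_lbounded (S : set 'cV[R]_d) (g : 'cV[R]_d -> R) (M : R) :
  (forall y, S y -> enorm y <= M) ->
  (forall x : 'cV[R]_d, exists2 del, 0 < del & exists c, forall y, S y ->
      (forall j, `|x j 0 - y j 0| < del) -> c <= g y) ->
  exists c, forall y, S y -> c <= g y.
Proof.
move=> SM loc.
pose B := [set v : 'rV[R]_d | forall j, `[-M, M]%classic (v ord0 j)].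
have : compact B.
  by apply: (@rV_compact _ _ (fun=> `[-M, M]%classic)) => j; exact: segment_compact.
rewrite compact_cover => coverB.
pose D := [set t : ('rV[R]_d * R * R)%type | 0 < t.1.2 /\ forall y, S y ->
   (forall j, `|t.1.1 ord0 j - y j 0| < t.1.2) -> t.2 <= g y].
have [||D' D'D cov] := coverB _ D (fun t => ball t.1.1 t.1.2).
- by move=> t _; exact: ball_open.
- move=> v Bv; have [del del0 [c Hc]] := loc v^T.
  exists (v, del, c); last exact: ballxx.
  by split => // y Sy near; apply: Hc => // j; rewrite mxE.
exists (- \sum_(t <- D') `|t.2|) => y Sy.
have [t tD' Bt] : cover [set` D'] (fun t => ball t.1.1 t.1.2) y^T.
  apply: cov => j /=; rewrite mxE in_itv /= -ler_norml.
  exact: le_trans (normr_coord_le_enorm _ _) (SM _ Sy).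
have := D'D t tD'; rewrite in_setE => -[_ Ht].
apply: (@le_trans _ _ (- `|t.2|)).
  rewrite lerN2 (bigD1_seq t) //= ?fset_uniq // lerDl.
  exact: sumr_ge0.
apply: le_trans (Ht y Sy _); first by rewrite lerNl -normrN ler_norm.
by move=> j; case: Bt => _ /(_ ord0 j); rewrite /ball /= mxE.
Qed.

Lemma lsc_closed_bounded_lbounded (S : set 'cV[R]_d) (g : 'cV[R]_d -> R) (M : R) :
  (forall x, (forall e, 0 < e -> exists y, S y /\ enorm (y - x) < e) -> S x) ->
  (forall y, S y -> enorm y <= M) ->
  (forall x, S x -> forall e, 0 < e -> exists del, 0 < del /\
     forall y, S y -> enorm (y - x) < del -> g x - e < g y) ->
  exists c, forall y, S y -> c <= g y.
Proof.
move=> closedS SM lsc; apply: (lbounded_of_locally_lbounded SM) => x.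
have box_ball (e : R) : 0 < e -> exists2 del, 0 < del &
    forall y : 'cV[R]_d, (forall j, `|x j 0 - y j 0| < del) -> enorm (y - x) < e.
  move=> e0; have [del del0 box] := @coord_box_in_enorm_ball R d e e0.
  exists del => // y near.
  by apply: box => j; rewrite !mxE distrC.
case: (pselect (S x)) => [Sx | notSx].
  have [del [del0 near_lsc]] := lsc x Sx 1 ltr01.
  have [del' del'0 box] := box_ball _ del0.
  exists del' => //; exists (g x - 1) => y Sy near.
  exact/ltW/near_lsc/box.
have [e e0 farS] : exists2 e, 0 < e & forall y, S y -> e <= enorm (y - x).
  apply: contrapT => nfar; apply/notSx/closedS => e e0.
  apply: contrapT => nnear; apply: nfar; exists e => // y Sy.
  by rewrite leNgt; apply/negP => close; apply: nnear; exists y.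
have [del del0 box] := box_ball _ e0.
exists del => //; exists 0 => y Sy /box.
by rewrite ltNge farS.
Qed.

End LowerBound.

Section Game.
Variables (R : realType) (n d q : nat) (X : 'I_n -> set 'cV[R]_d)
  (theta : 'I_n -> 'cV[R]_d -> 'cV[R]_q -> R) (A : 'I_n -> 'M[R]_(q, d)).
Implicit Types (x : 'I_n -> 'cV[R]_d) (i : 'I_n) (w : 'cV[R]_d).

Lemma upd_eq x i w : upd x i w i = w.
Proof. by rewrite /upd eqxx. Qed.

Lemma upd_upd x i w w' : upd (upd x i w) i w' = upd x i w'.
Proof. by apply: funext => j; rewrite /upd; case: eqP. Qed.

Lemma avg_updB x i w w' :
  avg A (upd x i w) - avg A (upd x i w') = n%:R^-1 *: (A i *m (w - w')).
Proof.
rewrite /avg -scalerBr -sumrB (bigD1 i) //= big1 ?addr0 ?upd_eq ?mulmxBr //.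
by move=> j /negPf ji; rewrite /upd ji subrr.
Qed.

(* Lower semicontinuity bounds [theta i . y0] below on the compact [X i] for
   one fixed aggregate [y0]; Hoelder continuity pays a bounded price for
   moving the aggregate, since it moves by at most [|A i| Delta / n]. *)
Lemma fcost_lbounded (Delta : R) (Omega : set 'cV[R]_q) (H gamma : R) x i :
  setting X Delta A Omega theta H gamma -> (forall j, conv (X j) (x j)) ->
  exists c, forall w, X i w -> c <= fcost theta A i (upd x i w).
Proof.
move=> [Xne [Xcl [Xdiam [Om [lsc [H_gt0 [gamma_gt0 hold]]]]]]] xc.
have inOmega w : X i w -> Omega (avg A (upd x i w)).
  move=> Xw; have [|e [e0 ball_e]] := Om (upd x i w).
    by move=> j; rewrite /upd; case: eqP => [->|_]; [exact: sub_conv | exact: xc].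
  by apply: ball_e; rewrite subrr enorm0.
have [w0 Xw0] := Xne i; pose y0 := avg A (upd x i w0).
have [c0 lb0] : exists c, forall w, X i w -> c <= theta i w y0.
  apply: (@lsc_closed_bounded_lbounded _ _ _ (theta i ^~ y0) (enorm w0 + Delta) (Xcl i)).
    move=> w Xw; rewrite -(subrK w0 w) addrC.
    by apply: le_trans (enormD _ _) _; rewrite lerD2l (Xdiam i w w0).
  exact: lsc i y0 (inOmega _ Xw0).
pose K := `|n%:R^-1| * (\sum_k \sum_j `|A i k j|) * Delta.
have A_ge0 : 0 <= \sum_k \sum_j `|A i k j| by apply: sumr_ge0 => k _; exact: sumr_ge0.
have K_ge0 : 0 <= K.
  by rewrite !mulr_ge0 // (le_trans (enorm_ge0 (w0 - w0)) (Xdiam _ _ _ Xw0 Xw0)).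
exists (c0 - H * powR K gamma) => w Xw.
have shift : enorm (avg A (upd x i w) - y0) <= K.
  rewrite avg_updB enormZ /K -mulrA ler_wpM2l //.
  by apply: le_trans (enorm_mulmx_le _ _) _; rewrite ler_wpM2l ?(Xdiam i w w0).
have pow_shift : powR (enorm (avg A (upd x i w) - y0)) gamma <= powR K gamma.
  by apply: (ge0_ler_powR (ltW gamma_gt0)); rewrite ?nnegrE ?enorm_ge0.
have := hold i w y0 _ Xw (inOmega _ Xw0) (inOmega _ Xw).
rewrite /fcost upd_eq ler_norml => /andP[+ _].
have := lb0 w Xw; have := ler_wpM2l (ltW H_gt0) pow_shift; lra.
Qed.

Lemma tfcost_upd_le_fcost x i (c : R) w :
  (forall w, X i w -> c <= fcost theta A i (upd x i w)) -> X i w ->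
  tfcost X theta A i (upd x i w) <= fcost theta A i (upd x i w).
Proof.
move=> lb Xw; apply: ge_inf.
  exists c => r [a [z [[a0 a1] [Xz [_ ->]]]]].
  rewrite -[c]mul1r -a1 mulr_suml; apply: ler_sum => k _.
  by rewrite upd_upd ler_wpM2l ?lb.
pose e0 (k : 'I_d.+1) : R := if k == ord0 then 1 else 0.
have e0_sum : \sum_k e0 k = 1.
  by rewrite (bigD1 ord0) //= big1 => [|k /negPf k0]; rewrite /e0 ?eqxx ?k0 ?addr0.
exists e0, (fun=> w); split; [split|split; [|split]] => //.
- by move=> k; rewrite /e0; case: eqP.
- by rewrite upd_eq -scaler_suml e0_sum scale1r.
- by rewrite upd_upd -mulr_suml e0_sum mul1r.
Qed.

Lemma tfcost_generator_eq x i z a h :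
  (exists c, forall w, X i w -> c <= fcost theta A i (upd x i w)) ->
  is_generator X theta A i x z a -> subdiff X theta A i x h ->
  forall k, tfcost X theta A i (upd x i (z k)) =
            tfcost X theta A i x + dotv h (z k - x i).
Proof.
move=> [c lb] [[a0 a1] [a_gt0 [Xz [xE tfE]]]] sd k.
set T0 := tfcost X theta A i x.
pose F l := fcost theta A i (upd x i (z l)); pose p l := dotv h (z l - x i).
have le_F l : tfcost X theta A i (upd x i (z l)) <= F l.
  exact: tfcost_upd_le_fcost lb (Xz l).
have ge_aff l : T0 + p l <= tfcost X theta A i (upd x i (z l)).
  exact/sd/sub_conv.
have sum_ap : \sum_l a l * p l = 0.
  under eq_bigr do rewrite -dotvZr scalerBr.
  by rewrite -dotv_sumr sumrB -scaler_suml a1 scale1r -xE subrr dotv0r.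
have gap_sum : \sum_l a l * (F l - (T0 + p l)) = 0.
  under eq_bigr do rewrite mulrBr mulrDr.
  by rewrite sumrB big_split /= -tfE -mulr_suml a1 mul1r sum_ap addr0 subrr.
have /eqP : a k * (F k - (T0 + p k)) = 0.
  apply: (psumr_eq0P _ gap_sum) => // l _.
  by rewrite mulr_ge0 ?subr_ge0 ?(le_trans (ge_aff l)).
rewrite mulf_eq0 gt_eqF //= subr_eq0 => /eqP gap_k.
by apply/eqP; rewrite eq_le ge_aff andbT -gap_k le_F.
Qed.

Lemma generator_deviation_le (Delta : R) (Omega : set 'cV[R]_q) (H gamma : R)
    x i z a h (eta : R) :
  setting X Delta A Omega theta H gamma -> (forall j, conv (X j) (x j)) ->
  is_generator X theta A i x z a -> subdiff X theta A i x h ->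
  (forall y, conv (range z) y -> - (eta * enorm (y - x i)) <= dotv h (y - x i)) ->
  forall k, `|tfcost X theta A i (upd x i (z k)) - tfcost X theta A i x|
              <= eta * enorm (z k - x i).
Proof.
move=> hs xc gen sd hyp k.
rewrite (tfcost_generator_eq (fcost_lbounded i hs xc) gen sd) addrAC subrr add0r.
by case: gen => [sa [a_gt0 [_ [xE _]]]]; exact: (normr_dotv_generator_le k sa a_gt0 xE hyp).
Qed.

End Game.

Unset Implicit Arguments.
Theorem lemma1 (R : realType) (n d q : nat) (X : 'I_n -> set 'cV[R]_d) (Delta : R)
  (A : 'I_n -> 'M[R]_(q, d)) (Omega : set 'cV[R]_q)
  (theta : 'I_n -> 'cV[R]_d -> 'cV[R]_q -> R) (H gamma : R) :
  setting X Delta A Omega theta H gamma ->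
  forall (xt : 'I_n -> 'cV[R]_d), (forall j, conv (X j) (xt j)) ->
  forall eta : R, 0 <= eta ->
  (forall (i : 'I_n) (z : 'I_d.+1 -> 'cV[R]_d) (a : 'I_d.+1 -> R) (h : 'cV[R]_d),
     is_generator X theta A i xt z a ->
     subdiff X theta A i xt h ->
     (forall y, conv (range z) y -> - (eta * enorm (y - xt i)) <= dotv h (y - xt i)) ->
     forall k, `|tfcost X theta A i (upd xt i (z k)) - tfcost X theta A i xt|
                 <= eta * enorm (z k - xt i))
  /\
  (forall (Z : 'I_n -> 'I_d.+1 -> 'cV[R]_d) (a : 'I_n -> 'I_d.+1 -> R),
     (forall i, is_generator X theta A i xt (Z i) (a i) /\
        exists h, subdiff X theta A i xt h /\
          (forall y, conv (range (Z i)) y ->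
             - (eta * enorm (y - xt i)) <= dotv h (y - xt i))) ->
     eta_stable X theta A (eta * Delta) xt Z).
Proof.
move=> hs xt xtc eta eta0.
split=> [i z a h | Z a HZ i k]; first exact: generator_deviation_le hs xtc.
have [gen [h [sd hyp]]] := HZ i.
have := generator_deviation_le hs xtc gen sd hyp k.
rewrite ler_norml => /andP[_ dev]; rewrite -lerBlDl (le_trans dev) //.
rewrite ler_wpM2l //; case: gen => [[a0 a1] [_ [Xz [xE _]]]].
rewrite xE; apply: le_trans (enorm_sub_comb_le _ _ a0 a1) _.
case: hs => [_ [_ [diam _]]]; rewrite -[leRHS]mul1r -a1 mulr_suml.
by apply: ler_sum => l _; rewrite ler_wpM2l ?(diam _ _ _ (Xz k) (Xz l)).
Qed.
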